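(* Consider the hypercube-based interactive proof of knowledge for the Rank Syndrome Decoding relation described in the context. If the prover knows $\mathbf{x}\in\mathbb{F}_{q^m}^n$ with $\mathbf{H}\mathbf{x}=\mathbf{y}$ and $W_R(\mathbf{x})\le r$ and executes the protocol correctly, then the verifier accepts with probability $1$ (the protocol is perfectly complete).
   Context: Let $q$ be a prime power, $m,n,k,r,\eta$ positive integers, $\mathbb{F}_{q^m}$ the field with $q^m$ elements and $\mathbb{F}_{q^{m\eta}}$ its degree-$\eta$ extension. For $\mathbf{x}=(x_1,\dots,x_n)\in\mathbb{F}_{q^m}^n$, its rank weight $W_R(\mathbf{x})$ is the dimension of the $\mathbb{F}_q$-span $U=\langle x_1,\dots,x_n\rangle$. A Rank-SD instance is $\mathbf{H}=(\mathbf{I}_{n-k}\,\|\,\mathbf{H}')\in\mathbb{F}_{q^m}^{(n-k)\times n}$, $\mathbf{y}\in\mathbb{F}_{q^m}^{n-k}$; a witness is $\mathbf{x}$ with $\mathbf{H}\mathbf{x}=\mathbf{y}$ and $W_R(\mathbf{x})\le r$. Writing $\mathbf{x}=(\mathbf{x}_A\|\mathbf{x}_B)$ with $\mathbf{x}_A\in\mathbb{F}_{q^m}^{n-k}$, one has $\mathbf{x}_A=\mathbf{y}-\mathbf{H}'\mathbf{x}_B$. Assuming $1\in U$ and $\dim U=r$, the annihilator polynomial $L(X)=\prod_{u\in U}(X-u)$ can be written $L(X)=(X^{q^r}-X)+\sum_{i=1}^{r-1}\beta_i(X^{q^i}-X)$, $\boldsymbol\beta=(\beta_1,\dots,\beta_{r-1})$.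 MPC protocol $\Pi^\eta$ (on linear sharings $[\![\cdot]\!]$): inputs are sharings of $\mathbf{x}_B$, $\boldsymbol\beta$, a uniformly random $\mathbf{a}\in\mathbb{F}_{q^{m\eta}}^{r-1}$ and $c=-\langle\boldsymbol\beta,\mathbf{a}\rangle$. Given public random $\gamma_1,\dots,\gamma_n,\varepsilon\in\mathbb{F}_{q^{m\eta}}$, parties compute $[\![\mathbf{x}_A]\!]=\mathbf{y}-\mathbf{H}'[\![\mathbf{x}_B]\!]$, $[\![z]\!]=-\sum_j\gamma_j([\![x_j]\!]^{q^r}-[\![x_j]\!])$, $[\![\omega_i]\!]=\sum_j\gamma_j([\![x_j]\!]^{q^i}-[\![x_j]\!])$ for $1\le i\le r-1$, open $\boldsymbol\alpha=\varepsilon\boldsymbol\omega+\mathbf{a}$, compute and open $v=\varepsilon z-\langle\boldsymbol\alpha,\boldsymbol\beta\rangle-c$, and accept iff $v=0$. Hypercube protocol: $N=2^D$ leaf parties indexed by $(i_1,\dots,i_D)\in\{1,2\}^D$. The prover additively shares $\mathbf{x}_B,\boldsymbol\beta,\mathbf{a},c$ among the leaves (leaf shares derived from seeds of a GGM tree, the last leaf's shares of $\mathbf{x}_B,\boldsymbol\beta,c$ being corrected so the sums are correct), commits each leaf state with a commitment scheme, and sends $h_0$, a hash of all leaf commitments. The verifier sends $((\gamma_j)_j,\varepsilon)$ uniform in $\mathbb{F}_{q^{m\eta}}^{n+1}$. For each dimension $d\in\{1,\dots,D\}$, the two main parties $(d,1),(d,2)$ hold the sums of the leaf shares with $i_d=1$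 (resp. $2$); the prover runs $\Pi^\eta$ on them, obtaining shares of $\boldsymbol\alpha$ and $v$, sets $H_d$ = hash of these shares, and sends $h_1=\mathrm{Hash}(H_1,\dots,H_D)$. The verifier sends $i^*$ uniform in $\{1,\dots,N\}$. The prover reveals the states of all leaves except $i^*$ (via GGM sibling path and, if $i^*\ne N$, the correction shares of leaf $N$), the commitment of leaf $i^*$, and the share of $\boldsymbol\alpha$ of leaf $i^*$. The verifier recomputes $h_0$, recomputes each dimension's execution (setting the share of the main party containing $i^*$ so that $v=0$), and accepts iff $\boldsymbol\alpha$ is the same for all $D$ executions and the recomputed $h_0,h_1$ match. *)

From HB Require Import structures.
From mathcomp Require Import all_boot all_order all_algebra all_field.
Set Implicit Arguments. Unset Strict Implicit. Unset Printing Implicit Defensive.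
Import Order.TTheory GRing.Theory Num.Theory.
Local Open Scope ring_scope.

(*  - E : fieldExtType F0, playing F_{q^{m eta}}; F_{q^m} is a subfield K.  *)
(*  - n = nk + k, nk = n - k.  Vectors are column vectors 'cV_n.            *)
(*  - Leaves of the hypercube are D.-tuples of booleans; false <-> index 1, *)
(*    true <-> index 2.  The "last" leaf N is (2,...,2) = all true; the     *)
(*    leaf (1,...,1) = all false adds the public constants (y), so that the *)
(*    main party (d,1) adds them in every dimension.                        *)

Section RankSD.
Variables (F0 : finFieldType) (E : fieldExtType F0).

Definition fq : nat := #|F0|.

Definition supp_space n (x : 'cV[E]_n) : {vspace E} :=
  span [seq x i ord0 | i <- enum 'I_n].
Definition rank_weight n (x : 'cV[E]_n) : nat := \dim (supp_space x).

Definition annihilator (U : {vspace E}) : {poly E} :=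
  \prod_(u : finvect_type E | (u : E) \in U) ('X - (u : E)%:P).

(* (X^{q^r} - X) + sum_{i=1}^{r-1} beta_i (X^{q^i} - X);
   beta 0 i stands for beta_{i+1} *)
Definition Lpoly (r : nat) (beta : 'rV[E]_(r.-1)) : {poly E} :=
  ('X^(fq ^ r) - 'X) + \sum_(i < r.-1) beta 0 i *: ('X^(fq ^ i.+1) - 'X).

Definition frob (i : nat) (e : E) : E := e ^+ (fq ^ i).

Variables (nk k r D : nat).
Variables (H' : 'M[E]_(nk, k)) (y : 'cV[E]_nk).

(* inputs of Pi^eta held by one party: shares of x_B, beta, a, c *)
Record shares := Shares {
  sx : 'cV[E]_k; sb : 'rV[E]_(r.-1); sa : 'rV[E]_(r.-1); sc : E }.
Definition add_sh (s t : shares) : shares :=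
  Shares (sx s + sx t) (sb s + sb t) (sa s + sa t) (sc s + sc t).
Definition zero_sh : shares := Shares 0 0 0 0.

Definition xA_sh (cst : bool) (s : shares) : 'cV[E]_nk :=
  (if cst then y else 0) - H' *m sx s.
Definition x_sh (cst : bool) (s : shares) : 'cV[E]_(nk + k) :=
  col_mx (xA_sh cst s) (sx s).
Definition z_sh (gam : 'I_(nk + k) -> E) (cst : bool) (s : shares) : E :=
  - \sum_j gam j * (frob r (x_sh cst s j 0) - x_sh cst s j 0).
Definition omega_sh (gam : 'I_(nk + k) -> E) (cst : bool) (s : shares)
  : 'rV[E]_(r.-1) :=
  \row_(i < r.-1) \sum_j gam j * (frob i.+1 (x_sh cst s j 0) - x_sh cst s j 0).
Definition alpha_sh gam (eps : E) cst (s : shares) : 'rV[E]_(r.-1) :=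
  eps *: omega_sh gam cst s + sa s.
Definition dotr (u v : 'rV[E]_(r.-1)) : E := \sum_i u 0 i * v 0 i.
Definition v_sh gam (eps : E) (alpha : 'rV[E]_(r.-1)) cst (s : shares) : E :=
  eps * z_sh gam cst s - dotr alpha (sb s) - sc s.

Definition leaf := (D.-tuple bool)%type.
Definition firstleaf : leaf := [tuple of nseq D false].
Definition lastleaf : leaf := [tuple of nseq D true].

Variables (S C : Type) (Hd : eqType).
Variable G : S -> S * S.                          (* GGM length-doubling PRG *)
Variable expand : S -> shares.
Definition aux := ('cV[E]_k * 'rV[E]_(r.-1) * E)%type. (* correction shares *)
Variable com : S -> option aux -> C.              (* commitment of a leaf state
                                                     (randomness from the seed) *)
Variable hash0 : seq C -> Hd.
Variable hashD : ('rV[E]_(r.-1) * E) -> ('rV[E]_(r.-1) * E) -> Hd.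
Variable hash1 : seq Hd -> Hd.

Definition ggm_step (s : S) (b : bool) : S := if b then (G s).2 else (G s).1.
Definition node_seed (rs : S) (p : seq bool) : S := foldl ggm_step rs p.
Definition sibling_path (rs : S) (istar : leaf) : seq S :=
  [seq node_seed rs (rcons (take d istar) (~~ nth false istar d)) | d <- iota 0 D].
Definition recon_seed (path : seq S) (istar j : leaf) : option S :=
  let d := find (fun i => nth false j i != nth false istar i) (iota 0 D) in
  omap (fun s => foldl ggm_step s (drop d.+1 j)) (onth path d).

Definition leaf_sh (st : S * option aux) : shares :=
  let e := expand st.1 in
  match st.2 with
  | Some (dx, db, dc) => Shares (sx e + dx) (sb e + db) (sa e) (sc e + dc)
  | None => e
  end.

Definition sum_sh (P : pred leaf) (f : leaf -> shares) : shares :=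
  \big[add_sh/zero_sh]_(j | P j) f j.
Definition party (d : 'I_D) (b : bool) : pred leaf := fun j => tnth j d == b.

Section Prover.
Variables (xB : 'cV[E]_k) (beta : 'rV[E]_(r.-1)) (rs : S).

Definition p_seed (j : leaf) : S := node_seed rs j.
Definition p_a : 'rV[E]_(r.-1) := \sum_(j : leaf) sa (expand (p_seed j)).
Definition p_c : E := - dotr beta p_a.
Definition p_aux : aux :=
  (xB - \sum_(j : leaf) sx (expand (p_seed j)),
   beta - \sum_(j : leaf) sb (expand (p_seed j)),
   p_c - \sum_(j : leaf) sc (expand (p_seed j))).
Definition p_state (j : leaf) : S * option aux :=
  (p_seed j, if j == lastleaf then Some p_aux else None).
Definition p_leaf_sh (j : leaf) : shares := leaf_sh (p_state j).

Definition prover_h0 : Hd :=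
  hash0 [seq com (p_state j).1 (p_state j).2 | j <- enum {: leaf}].

Variables (gam : 'I_(nk + k) -> E) (eps : E).
Definition p_main (d : 'I_D) (b : bool) : shares := sum_sh (party d b) p_leaf_sh.
Definition p_alpha_sh (d : 'I_D) (b : bool) := alpha_sh gam eps (~~ b) (p_main d b).
Definition p_alpha (d : 'I_D) := p_alpha_sh d false + p_alpha_sh d true.
Definition p_v_sh (d : 'I_D) (b : bool) := v_sh gam eps (p_alpha d) (~~ b) (p_main d b).
Definition p_H (d : 'I_D) : Hd :=
  hashD (p_alpha_sh d false, p_v_sh d false) (p_alpha_sh d true, p_v_sh d true).
Definition prover_h1 : Hd := hash1 [seq p_H d | d <- enum 'I_D].

Definition response := (seq S * option aux * C * 'rV[E]_(r.-1))%type.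
Definition prover_resp (istar : leaf) : response :=
  (sibling_path rs istar,
   (if istar != lastleaf then Some p_aux else None),
   com (p_state istar).1 (p_state istar).2,
   alpha_sh gam eps (istar == firstleaf) (p_leaf_sh istar)).
End Prover.

Definition verifier (h0 : Hd) (gam : 'I_(nk + k) -> E) (eps : E) (h1 : Hd)
    (istar : leaf) (resp : seq S * option aux * C * 'rV[E]_(r.-1)) : bool :=
  let: (path, auxr, cstar, alphastar) := resp in
  let vstate (j : leaf) : option (S * option aux) :=
    match recon_seed path istar j with
    | Some s => if j == lastleaf then omap (fun a => (s, Some a)) auxr
                else Some (s, None)
    | None => None
    end in
  let coms := [seq (if j == istar then Some cstar
                    else omap (fun st => com st.1 st.2) (vstate j))
              | j <- enum {: leaf}] in
  let vsh (j : leaf) : shares := odflt zero_sh (omap leaf_sh (vstate j)) in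
  let leaf_alpha (j : leaf) : 'rV[E]_(r.-1) :=
    if j == istar then alphastar else alpha_sh gam eps (j == firstleaf) (vsh j) in
  let alpha_main (d : 'I_D) (b : bool) : 'rV[E]_(r.-1) :=
    \sum_(j | party d b j) leaf_alpha j in
  let alpha (d : 'I_D) := alpha_main d false + alpha_main d true in
  let v_open (d : 'I_D) (b : bool) : E :=
    v_sh gam eps (alpha d) (~~ b) (sum_sh (party d b) vsh) in
  (* the main party containing istar gets the v share making v = 0 *)
  let v_main (d : 'I_D) (b : bool) : E :=
    if b == tnth istar d then - v_open d (~~ b) else v_open d b in
  let Hrec (d : 'I_D) : Hd :=
    hashD (alpha_main d false, v_main d false) (alpha_main d true, v_main d true) in
  [&& all isSome coms,
      [forall d1 : 'I_D, [forall d2 : 'I_D, alpha d1 == alpha d2]],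
      hash0 (pmap id coms) == h0 &
      hash1 [seq Hrec d | d <- enum 'I_D] == h1 ].

End RankSD.

From HB Require Import structures.
From mathcomp Require Import all_boot all_order all_algebra all_field ring.
Import Order.TTheory GRing.Theory Num.Theory.
Set Implicit Arguments. Unset Strict Implicit. Unset Printing Implicit Defensive.
Local Open Scope ring_scope.

(* Every value a party of Pi^eta computes is additive in its shares (the maps
   x |-> x^(q^i) are additive in characteristic p), so in each dimension the two
   main parties jointly run Pi^eta on the secret (x_B, beta, a, c) itself.  There
   alpha = eps omega + a, and v = eps (z - <omega, beta>) vanishes because every
   coordinate of x lies in U and is therefore a root of L.  The sibling path of
   i* rebuilds the seed of every other leaf, so the verifier recomputes exactly
   the prover's commitments, alpha and H_d, the missing v-share being forced by
   v = 0. *)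

Section FieldExtension.
Variables (F0 : finFieldType) (E : fieldExtType F0).

Lemma pnat_fqX i : [pchar E].-nat (fq F0 ^ i)%N.
Proof.
have [p p_pr pchar_p] := finPcharP F0.
by rewrite /fq (card_pprimeChar pchar_p) -expnM pnatX pnatE // (pchar_lalg E) pchar_p.
Qed.

Lemma frobD i (a b : E) : frob i (a + b) = frob i a + frob i b.
Proof. by rewrite /frob exprDn_pchar // pnat_fqX. Qed.

Lemma root_annihilator (U : {vspace E}) u : u \in U -> root (annihilator U) u.
Proof.
move=> Uu; rewrite /root /annihilator horner_prod.
by rewrite (bigD1 (u : finvect_type E)) //= hornerXsubC subrr mul0r.
Qed.

Lemma mem_supp_space n (x : 'cV[E]_n) i : x i 0 \in supp_space x.
Proof. by apply: memv_span; apply: map_f; rewrite mem_enum. Qed.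

Lemma horner_Lpoly r (beta : 'rV[E]_(r.-1)) e :
  (Lpoly beta).[e] = frob r e - e + \sum_(i < r.-1) beta 0 i * (frob i.+1 e - e).
Proof.
rewrite /Lpoly !(hornerE, horner_sum); congr (_ + _); apply: eq_bigr => i _.
by rewrite !hornerE.
Qed.

End FieldExtension.

Section PiEta.
Variables (F0 : finFieldType) (E : fieldExtType F0) (nk k r : nat).
Variables (H' : 'M[E]_(nk, k)) (y : 'cV[E]_nk) (gam : 'I_(nk + k) -> E) (eps : E).
Local Notation shares := (shares E k r).
Local Notation add_sh := (@add_sh F0 E k r).
Local Notation zero_sh := (@zero_sh F0 E k r).

Definition omega_of (v : 'cV[E]_(nk + k)) : 'rV[E]_(r.-1) :=
  \row_(i < r.-1) \sum_j gam j * (frob i.+1 (v j 0) - v j 0).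
Definition z_of (v : 'cV[E]_(nk + k)) : E :=
  - \sum_j gam j * (frob r (v j 0) - v j 0).

(* [x_sh] with its boolean "adds y" generalized to adding [c *: y]: everything
   a party computes is then additive in the pair (c, its shares). *)
Definition x_share (c : E) (s : shares) : 'cV[E]_(nk + k) :=
  col_mx (c *: y - H' *m sx s) (sx s).
Definition alpha_share c s := eps *: omega_of (x_share c s) + sa s.
Definition v_share alpha c s := eps * z_of (x_share c s) - dotr alpha (sb s) - sc s.

Lemma x_shE (b : bool) s : x_sh H' y b s = x_share b%:R s.
Proof. by rewrite /x_sh /xA_sh /x_share; case: b; rewrite ?scale1r ?scale0r. Qed.

Lemma alpha_shE (b : bool) s : alpha_sh H' y gam eps b s = alpha_share b%:R s.
Proof. by rewrite /alpha_sh /alpha_share /omega_sh x_shE. Qed.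

Lemma v_shE alpha (b : bool) s : v_sh H' y gam eps alpha b s = v_share alpha b%:R s.
Proof. by rewrite /v_sh /v_share /z_sh x_shE. Qed.

Lemma x_shareD c1 c2 s1 s2 :
  x_share (c1 + c2) (add_sh s1 s2) = x_share c1 s1 + x_share c2 s2.
Proof. by rewrite /x_share add_col_mx scalerDl mulmxDr opprD addrACA. Qed.

Lemma omega_ofD v w : omega_of (v + w) = omega_of v + omega_of w.
Proof.
apply/rowP=> i; rewrite !mxE -big_split; apply: eq_bigr => j _.
by rewrite !mxE frobD /=; ring.
Qed.

Lemma z_ofD v w : z_of (v + w) = z_of v + z_of w.
Proof.
rewrite /z_of -opprD -big_split; congr (- _); apply: eq_bigr => j _.
by rewrite !mxE frobD /=; ring.
Qed.

Lemma dotrDl (u v w : 'rV[E]_(r.-1)) : dotr (u + v) w = dotr u w + dotr v w.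
Proof. by rewrite /dotr -big_split; apply: eq_bigr => i _; rewrite mxE mulrDl. Qed.

Lemma dotrDr (u v w : 'rV[E]_(r.-1)) : dotr u (v + w) = dotr u v + dotr u w.
Proof. by rewrite /dotr -big_split; apply: eq_bigr => i _; rewrite mxE mulrDr. Qed.

Lemma dotrZl a (u v : 'rV[E]_(r.-1)) : dotr (a *: u) v = a * dotr u v.
Proof. by rewrite /dotr mulr_sumr; apply: eq_bigr => i _; rewrite mxE mulrA. Qed.

Lemma dotrC (u v : 'rV[E]_(r.-1)) : dotr u v = dotr v u.
Proof. by apply: eq_bigr => i _; rewrite mulrC. Qed.

Lemma alpha_shareD c1 c2 s1 s2 :
  alpha_share (c1 + c2) (add_sh s1 s2) = alpha_share c1 s1 + alpha_share c2 s2.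
Proof. by rewrite /alpha_share x_shareD omega_ofD scalerDr addrACA. Qed.

Lemma v_shareD alpha c1 c2 s1 s2 :
  v_share alpha (c1 + c2) (add_sh s1 s2) = v_share alpha c1 s1 + v_share alpha c2 s2.
Proof. by rewrite /v_share x_shareD z_ofD dotrDr /=; ring. Qed.

Lemma sum_sh_morph (I : Type) (V : zmodType) (f : E -> shares -> V) :
  (forall c1 c2 s1 s2, f (c1 + c2) (add_sh s1 s2) = f c1 s1 + f c2 s2) ->
  forall (js : seq I) (P : pred I) c s,
  \sum_(j <- js | P j) f (c j) (s j) =
  f (\sum_(j <- js | P j) c j) (\big[add_sh/zero_sh]_(j <- js | P j) s j).
Proof.
move=> fD js P c s; have f0 : f 0 zero_sh = 0.
  apply: (addrI (f 0 zero_sh)); rewrite -fD addr0.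
  by rewrite /add_sh /= !addr0.
by elim/big_rec3: _ => [|j a b t _ ->]; rewrite ?fD.
Qed.

Lemma z_of_roots (beta : 'rV[E]_(r.-1)) (v : 'cV[E]_(nk + k)) :
  (forall j, root (Lpoly beta) (v j 0)) -> z_of v = dotr (omega_of v) beta.
Proof.
move=> Lv; rewrite /dotr /z_of /omega_of.
under [in RHS]eq_bigr do rewrite mxE mulr_suml.
rewrite exchange_big -sumrN; apply: eq_bigr => j _ /=.
move: (Lv j); rewrite /root horner_Lpoly addr_eq0 => /eqP ->.
by rewrite mulrN opprK mulr_sumr; apply: eq_bigr => i _; ring.
Qed.

Lemma v_share_eq0 s :
  sc s = - dotr (sb s) (sa s) -> (forall j, root (Lpoly (sb s)) (x_share 1 s j 0)) ->
  v_share (alpha_share 1 s) 1 s = 0.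
Proof.
move=> cs /z_of_roots zs.
by rewrite /v_share /alpha_share zs cs dotrDl dotrZl [dotr (sa s) _]dotrC; ring.
Qed.

End PiEta.

Lemma recon_seed_sibling_path (S : Type) (G : S -> S * S) (D : nat) (rs : S)
    (istar j : leaf D) :
  j != istar -> recon_seed G (sibling_path G rs istar) istar j = Some (node_seed G rs j).
Proof.
move=> j_istar; rewrite /recon_seed.
set differ := fun i => nth false j i != nth false istar i.
set d := find differ (iota 0 D).
have has_differ : has differ (iota 0 D).
  apply: contraNT j_istar => /hasPn same; apply/eqP/val_inj.
  apply: (eq_from_nth (x0 := false)) => [|i]; rewrite ?size_tuple // => ltiD.
  by apply/eqP/negPn; apply: same; rewrite mem_iota.
have ltdD : (d < D)%N by rewrite -[X in (_ < X)%N](size_iota 0 D) -has_find.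
have jd : nth false j d = ~~ nth false istar d.
  by move: (nth_find 0%N has_differ); rewrite nth_iota // /differ; case: nth; case: nth.
have prefix : take d istar = take d j.
  apply: (eq_from_nth (x0 := false)) => [|i].
    by rewrite !size_take !size_tuple ltdD.
  rewrite size_take size_tuple ltdD => ltid.
  rewrite !nth_take //; move: (before_find 0%N ltid).
  by rewrite nth_iota ?(ltn_trans ltid) // add0n /differ => /negbFE/eqP ->.
rewrite /sibling_path onthE -map_comp (nth_map 0%N) ?size_iota // nth_iota //=.
by rewrite /node_seed -foldl_cat prefix -jd -take_nth ?size_tuple // cat_take_drop.
Qed.

Section HonestProver.
Variables (F0 : finFieldType) (E : fieldExtType F0) (nk k r D : nat).
Variables (S : Type) (G : S -> S * S) (expand : S -> shares E k r).
Variables (xB : 'cV[E]_k) (beta : 'rV[E]_(r.-1)) (rs : S).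
Local Notation shares := (shares E k r).
Local Notation add_sh := (@add_sh F0 E k r).
Local Notation sum_sh := (@sum_sh F0 E k r D).
Local Notation leaf_shares := (p_leaf_sh G expand xB beta rs).
Local Notation seed_shares j := (expand (p_seed G rs j)).
Local Notation main_shares := (p_main (D := D) G expand xB beta rs).

Lemma sum_shE P f :
  sum_sh P f = Shares (\sum_(j | P j) sx (f j)) (\sum_(j | P j) sb (f j))
                      (\sum_(j | P j) sa (f j)) (\sum_(j | P j) sc (f j)).
Proof.
rewrite /sum_sh; elim: (index_enum _) => [|j js IHjs]; rewrite ?big_nil // !big_cons.
by case: (P j); rewrite IHjs.
Qed.

Lemma sum_parties (V : nmodType) (F : leaf D -> V) d :
  \sum_(j | party d false j) F j + \sum_(j | party d true j) F j = \sum_j F j.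
Proof.
rewrite [RHS](bigID (party d false)); congr (_ + _).
by apply: eq_bigl => j; rewrite /party; case: (tnth j d).
Qed.

Lemma add_sh_parties f d :
  add_sh (sum_sh (party d false) f) (sum_sh (party d true) f) = sum_sh predT f.
Proof. by rewrite !sum_shE -!(sum_parties _ d). Qed.

Definition secret_sh : shares :=
  Shares xB beta (p_a D G expand rs) (p_c D G expand beta rs).

Lemma sum_corrected (V : zmodType) (proj : shares -> V) delta :
    proj (leaf_shares (lastleaf D)) = proj (seed_shares (lastleaf D)) + delta ->
  \sum_(j : leaf D) proj (leaf_shares j) = \sum_(j : leaf D) proj (seed_shares j) + delta.
Proof.
move=> last_corrected; rewrite (bigD1 (lastleaf D)) // [in RHS](bigD1 (lastleaf D)) //.
rewrite last_corrected addrAC; congr (_ + _ + _); apply: eq_bigr => j /negbTE not_last.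
by rewrite /p_leaf_sh /p_state not_last.
Qed.

Lemma sum_leaf_shares : sum_sh predT leaf_shares = secret_sh.
Proof.
have last_shares : leaf_shares (lastleaf D) =
    let: (dx, db, dc) := p_aux D G expand xB beta rs in
  Shares (sx (seed_shares (lastleaf D)) + dx) (sb (seed_shares (lastleaf D)) + db)
         (sa (seed_shares (lastleaf D))) (sc (seed_shares (lastleaf D)) + dc).
  by rewrite /p_leaf_sh /p_state eqxx.
rewrite sum_shE; congr Shares.
- rewrite (sum_corrected (delta := xB - \sum_(j : leaf D) sx (seed_shares j))).
    by rewrite addrC subrK.
  by rewrite last_shares.
- rewrite (sum_corrected (delta := beta - \sum_(j : leaf D) sb (seed_shares j))).
    by rewrite addrC subrK.
  by rewrite last_shares.
- by rewrite (sum_corrected (delta := 0)) ?last_shares ?addr0.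
- rewrite (sum_corrected
    (delta := p_c D G expand beta rs - \sum_(j : leaf D) sc (seed_shares j))).
    by rewrite addrC subrK.
  by rewrite last_shares.
Qed.

Lemma add_main_shares d : add_sh (main_shares d false) (main_shares d true) = secret_sh.
Proof. by rewrite add_sh_parties sum_leaf_shares. Qed.

Variables (H' : 'M[E]_(nk, k)) (y : 'cV[E]_nk) (gam : 'I_(nk + k) -> E) (eps : E).
Local Notation alpha_main := (p_alpha_sh (D := D) H' y G expand xB beta rs gam eps).
Local Notation alpha := (p_alpha (D := D) H' y G expand xB beta rs gam eps).
Local Notation v_main := (p_v_sh (D := D) H' y G expand xB beta rs gam eps).

Lemma p_alphaE d : alpha d = alpha_share H' y gam eps 1 secret_sh.
Proof. by rewrite /p_alpha /p_alpha_sh !alpha_shE -alpha_shareD add_main_shares addr0. Qed.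

Lemma add_p_v_sh d :
  v_main d false + v_main d true = v_share H' y gam eps (alpha d) 1 secret_sh.
Proof. by rewrite /p_v_sh !v_shE -v_shareD add_main_shares addr0. Qed.

Lemma sum_firstleaf d b : \sum_(j | party d b j) ((j == firstleaf D)%:R : E) = (~~ b)%:R.
Proof.
rewrite big_mkcond (bigD1 (firstleaf D)) //= big1 ?addr0 => [|j /negbTE->].
  by rewrite eqxx /party /firstleaf tnth_nseq; case: b.
by case: ifP.
Qed.

Lemma sum_leaf_alpha d b :
  \sum_(j | party d b j) alpha_sh H' y gam eps (j == firstleaf D) (leaf_shares j)
  = alpha_main d b.
Proof.
under eq_bigr do rewrite alpha_shE.
by rewrite (sum_sh_morph (alpha_shareD H' y gam eps)) sum_firstleaf -alpha_shE.
Qed.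

End HonestProver.

Section HonestVerifier.
Variables (F0 : finFieldType) (E : fieldExtType F0) (nk k r D : nat).
Variables (H' : 'M[E]_(nk, k)) (y : 'cV[E]_nk).
Variables (S C : Type) (Hd : eqType) (G : S -> S * S) (expand : S -> shares E k r).
Variables (com : S -> option (aux E k r) -> C) (hash0 : seq C -> Hd).
Variables (hashD : ('rV[E]_(r.-1) * E) -> ('rV[E]_(r.-1) * E) -> Hd) (hash1 : seq Hd -> Hd).
Variables (xB : 'cV[E]_k) (beta : 'rV[E]_(r.-1)) (rs : S).
Variables (gam : 'I_(nk + k) -> E) (eps : E) (istar : leaf D).
Local Notation leaf_shares := (p_leaf_sh G expand xB beta rs).
Local Notation state := (p_state G expand xB beta rs).
Local Notation main_shares := (p_main (D := D) G expand xB beta rs).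
Local Notation alpha_main := (p_alpha_sh (D := D) H' y G expand xB beta rs gam eps).
Local Notation alpha := (p_alpha (D := D) H' y G expand xB beta rs gam eps).
Local Notation v_main := (p_v_sh (D := D) H' y G expand xB beta rs gam eps).

Hypothesis v_main_eq0 : forall d, v_main d false + v_main d true = 0.

(* The leaf state that [verifier] rebuilds from the honest response, written out
   as a notation so that it matches the unfolded verifier syntactically. *)
Local Notation vstate j :=
  (match recon_seed G (sibling_path G rs istar) istar j with
   | Some s => if j == lastleaf D
               then omap (fun a => (s, Some a))
                      (if istar != lastleaf D then Some (p_aux D G expand xB beta rs)
                       else None)
               else Some (s, None)
   | None => None
   end).

Lemma vstate_honest j : j != istar -> vstate j = Some (state j).
Proof.
move=> j_istar; rewrite recon_seed_sibling_path // /p_state.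
by case: eqP => [j_last | //]; move: j_istar; rewrite j_last eq_sym => ->.
Qed.

Lemma honest_verifier_accepts :
  verifier H' y G expand com hash0 hashD hash1
    (prover_h0 D G expand com hash0 xB beta rs) gam eps
    (prover_h1 D H' y G expand hashD hash1 xB beta rs gam eps) istar
    (prover_resp H' y G expand com xB beta rs gam eps istar) = true.
Proof.
have comE j : (if j == istar then Some (com (state istar).1 (state istar).2)
               else omap (fun st => com st.1 st.2) (vstate j))
    = Some (com (state j).1 (state j).2).
  by case: eqP => [-> | /eqP/vstate_honest ->].
have alphaE d b : \sum_(j | party d b j)
    (if j == istar then alpha_sh H' y gam eps (istar == firstleaf D) (leaf_shares istar)
     else alpha_sh H' y gam eps (j == firstleaf D)
            (odflt (zero_sh E k r) (omap (leaf_sh expand) (vstate j))))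
  = alpha_main d b.
  rewrite -sum_leaf_alpha; apply: eq_bigr => j _.
  by case: eqP => [-> | /eqP/vstate_honest ->].
have mainE d b : b != tnth istar d ->
    sum_sh (party d b) (fun j => odflt (zero_sh E k r) (omap (leaf_sh expand) (vstate j)))
  = main_shares d b.
  move=> b_istar; apply: eq_bigr => j j_b; rewrite vstate_honest //.
  by apply: contraTneq j_b => ->; rewrite /party eq_sym (negbTE b_istar).
have v_mainN b d : v_main d b = - v_main d (~~ b).
  apply/eqP; rewrite -addr_eq0; case: b; first rewrite addrC; exact/eqP/v_main_eq0.
rewrite /verifier /prover_resp /= (eq_map comE); apply/and4P; split.
- by rewrite all_map; apply/allP.
- apply/'forall_forallP => d1 d2; rewrite !alphaE; apply/eqP.
  by change (alpha d1 = alpha d2); rewrite !p_alphaE.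
- by rewrite (map_comp Some) map_pK.
- rewrite /prover_h1; apply/eqP; congr hash1; apply: eq_map => d.
  rewrite !alphaE /p_H; case istar_d: (tnth istar d); rewrite /= mainE ?istar_d //.
  + by rewrite (v_mainN true).
  + by rewrite (v_mainN false).
Qed.

End HonestVerifier.

Theorem theorem1
  (F0 : finFieldType) (E : fieldExtType F0) (m eta : nat)
  (K : {subfield E})
  (hm : (0 < m)%N) (heta : (0 < eta)%N)
  (hK : \dim K = m) (hE : \dim {: E}%VS = (m * eta)%N)
  (nk k r : nat) (hnk : (0 < nk)%N) (hk : (0 < k)%N) (hr : (0 < r)%N)
  (H' : 'M[E]_(nk, k)) (y : 'cV[E]_nk)
  (hH' : forall i j, H' i j \in K) (hy : forall i, y i ord0 \in K)
  (x : 'cV[E]_(nk + k)) (hx : forall i, x i ord0 \in K)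
  (hHx : row_mx 1%:M H' *m x = y)
  (hW : (rank_weight x <= r)%N)
  (h1U : 1 \in supp_space x) (hdimU : \dim (supp_space x) = r)
  (beta : 'rV[E]_(r.-1)) (hbeta : annihilator (supp_space x) = Lpoly beta)
  (D : nat) (S C : Type) (Hd : eqType)
  (G : S -> S * S) (expand : S -> shares E k r)
  (com : S -> option (aux E k r) -> C)
  (hash0 : seq C -> Hd)
  (hashD : ('rV[E]_(r.-1) * E) -> ('rV[E]_(r.-1) * E) -> Hd)
  (hash1 : seq Hd -> Hd)
  (rs : S) (gam : 'I_(nk + k) -> E) (eps : E) (istar : leaf D) :
  let xB := dsubmx x in
  verifier H' y G expand com hash0 hashD hash1
    (prover_h0 D G expand com hash0 xB beta rs)
    gam eps
    (prover_h1 D H' y G expand hashD hash1 xB beta rs gam eps)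
    istar
    (prover_resp H' y G expand com xB beta rs gam eps istar) = true.
Proof.
move=> xB; set secret := secret_sh D G expand xB beta rs.
have x_secret : x_share H' y 1 secret = x.
  rewrite /x_share /= scale1r -hHx -{1}(vsubmxK x) mul_row_col mul1mx addrK.
  exact: vsubmxK.
apply: honest_verifier_accepts => d.
rewrite add_p_v_sh p_alphaE; apply: v_share_eq0 => // j.
by rewrite x_secret -hbeta root_annihilator // mem_supp_space.
Qed.
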